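(* Let $s,b\ge1$, let $(a_i)$ be the $(s,b)$-Generacci sequence, and let $p\ge1$. If an integer $k\ge2$ has an $(s,b)$-Generacci legal decomposition using only summands from $\{a_1,\dots,a_p\}$, then so does $k-1$. Consequently, the smallest positive integer with no such decomposition using $\{a_1,\dots,a_p\}$ is one more than the largest integer that has one.
   Context: Fix integers $s,b\ge1$. For an increasing sequence of positive integers $(a_i)_{i\ge1}$, the bins are $\mathcal B_n=\{a_{b(n-1)+1},\dots,a_{bn}\}$ for $n\ge1$, and $\mathcal B_n=\emptyset$ for $n\le 0$. An $(s,b)$-Generacci legal decomposition of a positive integer $m$ using this sequence is an expression $m=a_{\ell_1}+\cdots+a_{\ell_k}$ with $a_{\ell_1}>a_{\ell_2}>\cdots>a_{\ell_k}$ such that for all $i$ and all $j$, $\{a_{\ell_i},a_{\ell_{i+1}}\}\not\subset \mathcal B_{j-s}\cup\mathcal B_{j-s+1}\cup\cdots\cup\mathcal B_j$ (so no two summands lie in the same bin, and the bins containing any two summands have at least $s$ bins strictly between them). The $(s,b)$-Generacci sequence is the increasing sequence of positive integers $(a_i)_{i\ge1}$ in which each $a_i$ is the smallest positive integer that has no $(s,b)$-Generacci legal decomposition using only elements of $\{a_1,\dots,a_{i-1}\}$. *)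

From mathcomp Require Import all_boot.
Set Implicit Arguments. Unset Strict Implicit. Unset Printing Implicit Defensive.

(* Sequences are a : nat -> nat, with a i meaning a_i for i >= 1 (a 0 unused). *)

(* Index of the bin containing a_i (i >= 1): B_n = {a_{b(n-1)+1},...,a_{bn}}. *)
Definition bin (b i : nat) : nat := (i - 1) %/ b + 1.

(* a_x and a_y both lie in B_{j-s} ∪ ... ∪ B_j.  Bins with index <= 0 are
   empty; since bin indices are >= 1, truncated subtraction j - s is harmless. *)
Definition in_window (s b j x y : nat) : Prop :=
  (j - s <= bin b x <= j) && (j - s <= bin b y <= j).

Definition far_apart (s b x y : nat) : Prop :=
  ~ (exists j : nat, in_window s b j x y).

Definition legal_decomp (s b : nat) (a : nat -> nat) (p m : nat) : Prop :=
  exists l : seq nat,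
    [/\ l != [::],
        all (fun i => 1 <= i <= p) l,
        sorted (fun x y => a y < a x) l,
        (forall i, i.+1 < size l -> far_apart s b (nth 0 l i) (nth 0 l i.+1)) &
        \sum_(i <- l) a i = m].

Definition is_generacci (s b : nat) (a : nat -> nat) : Prop :=
  (forall i, 1 <= i -> a i < a i.+1) /\
  (forall i, 1 <= i ->
     [/\ 0 < a i,
         ~ legal_decomp s b a i.-1 (a i) &
         forall m, 0 < m < a i -> legal_decomp s b a i.-1 m]).

From mathcomp Require Import all_boot zify.
From Stdlib Require Import Classical.

Set Implicit Arguments.
Unset Strict Implicit.
Unset Printing Implicit Defensive.

(* Because the sequence is increasing, a decomposition is legal exactly when
   the indices of consecutive summands lie more than s bins apart.  If k >= 2
   has a legal decomposition with smallest summand a_x, then either a_x = 1 and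
   dropping it decomposes k - 1, or, by the minimality defining a_x, the number
   a_x - 1 has a legal decomposition with indices below x; substituting it for
   a_x keeps the gaps, since its largest summand sits in a bin no later than
   that of a_x.  Decomposable numbers are therefore downward closed, and they
   are bounded by p * a_p, whence the largest one M and the gap at M + 1. *)

Definition bin_gap (s b x y : nat) : bool := bin b y + s < bin b x.

Lemma leq_bin b x y : y <= x -> bin b y <= bin b x.
Proof. by move=> le_yx; rewrite leq_add2r leq_div2r // leq_sub2r. Qed.

Lemma bin_gap_trans s b : transitive (bin_gap s b).
Proof. by move=> y x z; rewrite /bin_gap; lia. Qed.

Lemma bin_gap_ltn s b x y : bin_gap s b x y -> y < x.
Proof.
rewrite ltnNge; apply: contraTN => le_xy.
by rewrite /bin_gap -leqNgt (leq_trans (leq_bin b le_xy)) ?leq_addr.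
Qed.

Lemma far_apart_bin_gap s b x y :
  bin b y <= bin b x -> far_apart s b x y <-> bin_gap s b x y.
Proof.
move=> le_bin; split=> [far | gap [j /andP[/andP[? ?] /andP[? ?]]]].
  rewrite /bin_gap ltnNge; apply/negP=> near; apply: far.
  by exists (bin b x); rewrite /in_window; apply/andP; split; apply/andP; lia.
by move: gap; rewrite /bin_gap; lia.
Qed.

Lemma legal_decomp0 s b a m : ~ legal_decomp s b a 0 m.
Proof. by case=> [[|x l] [//= _ /andP[/andP[x1 x0] _]]]; lia. Qed.

Section IncreasingSequence.

Variables (s b : nat) (a : nat -> nat).
Hypothesis a_incr : forall i, 1 <= i -> a i < a i.+1.

Lemma incr_ltn i j : 1 <= i -> i < j -> a i < a j.
Proof.
move=> i1; elim: j => [//| j IHj]; rewrite ltnS leq_eqVlt => /predU1P[<- | lt_ij].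
  exact: a_incr.
by rewrite (ltn_trans (IHj lt_ij)) // a_incr // (leq_trans i1 (ltnW lt_ij)).
Qed.

Lemma incr_leq i j : 1 <= i -> i <= j -> a i <= a j.
Proof. by move=> i1; rewrite leq_eqVlt => /predU1P[-> // | /(incr_ltn i1)/ltnW]. Qed.

Lemma legal_decompE p m :
  legal_decomp s b a p m <->
  exists l : seq nat,
    [/\ l != [::], all (fun i => 1 <= i <= p) l, sorted (bin_gap s b) l &
        \sum_(i <- l) a i = m].
Proof.
split=> [[l [l0 l_in l_sorted l_far l_sum]] | [l [l0 l_in l_sorted l_sum]]].
  exists l; split=> //; apply/(sortedP 0) => i lt_i.
  have idx1 j : j < size l -> 1 <= nth 0 l j.
    by move=> lt_j; have /andP[] := allP l_in _ (mem_nth 0 lt_j).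
  have lt_a := (sortedP 0 l_sorted) i lt_i.
  apply/far_apart_bin_gap; last exact: l_far.
  apply: leq_bin; rewrite leqNgt; apply: contraTN lt_a => lt_idx.
  by rewrite -leqNgt (ltnW (incr_ltn (idx1 _ (ltnW lt_i)) lt_idx)).
exists l; split=> //.
- have l_ge1 : all (leq 1) l by apply: sub_all l_in => i /andP[].
  elim: l l_ge1 l_sorted {l0 l_in l_sum} => [//| x [//| y l] IHl] /=.
  case/and3P=> x1 y1 l_ge1 /andP[gap_xy sorted_yl] /=.
  by rewrite incr_ltn ?(bin_gap_ltn gap_xy) //; apply: IHl; rewrite /= ?y1.
- move=> i lt_i; apply/far_apart_bin_gap; last exact: (sortedP 0 l_sorted).
  exact/leq_bin/ltnW/bin_gap_ltn/(sortedP 0 l_sorted).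
Qed.

Lemma sorted_bin_gap_replace_last l x q :
  sorted (bin_gap s b) (rcons l x) -> sorted (bin_gap s b) q ->
  all (fun h => bin b h <= bin b x) q -> sorted (bin_gap s b) (l ++ q).
Proof.
rewrite !(sorted_pairwise (@bin_gap_trans s b)) pairwise_rcons pairwise_cat.
case/andP=> gap_lx pair_l pair_q q_le; apply/and3P; split=> //.
apply/allrelP=> y h y_l h_q.
by move: (allP gap_lx y y_l) (allP q_le h h_q); rewrite /bin_gap; lia.
Qed.

Lemma legal_decomp_le p m : legal_decomp s b a p m -> m <= p * a p.
Proof.
case=> l [_ l_in l_sorted _ <-].
have l_uniq : uniq l.
  apply: sorted_uniq l_sorted => [y x z lt_xy lt_yz | x]; last exact: ltnn.
  exact: ltn_trans lt_yz lt_xy.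
have size_l : size l <= p.
  rewrite -[leqRHS](size_iota 1); apply: (uniq_leq_size l_uniq) => i /(allP l_in).
  by rewrite mem_iota; lia.
apply: (@leq_trans (\sum_(i <- l) a p)).
  rewrite big_seq_cond [leqRHS]big_seq_cond; apply: leq_sum => i.
  by case/andP=> /(allP l_in)/andP[i1 ip] _; apply: incr_leq.
by rewrite big_const_seq count_predT iter_addn_0 mulnC leq_mul2r size_l orbT.
Qed.

End IncreasingSequence.

Section GeneracciSequence.

Variables (s b : nat) (a : nat -> nat).
Hypothesis ha : is_generacci s b a.

Lemma generacci_a1 : a 1 = 1.
Proof.
have [a1_gt0 _ below_a1] := ha.2 1 (leqnn 1).
apply/eqP; rewrite eqn_leq a1_gt0 andbT leqNgt; apply/negP => a1_gt1.
by apply: (@legal_decomp0 s b a 1); apply: below_a1; rewrite a1_gt1.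
Qed.

Lemma legal_decomp_pred p k :
  2 <= k -> legal_decomp s b a p k -> legal_decomp s b a p k.-1.
Proof.
move=> + /(legal_decompE _ _ ha.1) [l [+ + + sum_l]]; subst k.
case/lastP: l => [_ //| l x] k2 _.
rewrite all_rcons -cats1 big_cat big_seq1 /= in k2 *.
case/andP=> /andP[x1 xp] l_in; rewrite cats1 => l_sorted.
have [ax_gt0 _ below_ax] := ha.2 x x1.
have [ax1 | ax_gt1] := leqP (a x) 1.
  case: l l_in l_sorted k2 => [_ _ | y l l_in l_sorted _]; first by rewrite big_nil; lia.
  apply/(legal_decompE _ _ ha.1); exists (y :: l); split=> //.
  - by move: l_sorted; rewrite -cats1 => /cat_sorted2[].
  - by rewrite (_ : a x = 1) ?addn1; lia.
have /(legal_decompE _ _ ha.1) [q [q0 q_in q_sorted q_sum]] :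
    legal_decomp s b a x.-1 (a x).-1 by apply: below_ax; lia.
apply/(legal_decompE _ _ ha.1); exists (l ++ q); split.
- by case: (l) q0.
- by rewrite all_cat l_in; apply: sub_all q_in => i /andP[-> /leq_trans->] //; lia.
- apply: sorted_bin_gap_replace_last l_sorted q_sorted _.
  by apply: sub_all q_in => h /andP[_ hx]; apply: leq_bin; lia.
- by rewrite big_cat /= q_sum; lia.
Qed.

Lemma legal_decomp_downward p k n :
  legal_decomp s b a p k -> 0 < n <= k -> legal_decomp s b a p n.
Proof.
move=> dec_k /andP[n_gt0 le_nk].
suff dec_sub d : d <= k - n -> legal_decomp s b a p (k - d).
  by rewrite -(subKn le_nk); apply: dec_sub.
elim: d => [|d IHd] le_d; first by rewrite subn0.
by rewrite subnS; apply: legal_decomp_pred (IHd (ltnW le_d)); lia.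
Qed.

End GeneracciSequence.

Lemma bounded_has_max (P : nat -> Prop) N m :
  (forall n, P n -> n <= N) -> P m -> exists M, P M /\ forall n, P n -> n <= M.
Proof.
elim: N => [|N IHN] bounded Pm.
  by exists m; split=> // n /bounded; rewrite leqn0 => /eqP->.
case: (classic (P N.+1)) => [PN1 | notPN1]; first by exists N.+1.
apply: IHN Pm => n Pn; have := bounded n Pn.
by rewrite leq_eqVlt => /predU1P[eq_n | //]; case: notPN1; rewrite -eq_n.
Qed.

Theorem mainTheorem5 (s b : nat) (hs : 1 <= s) (hb : 1 <= b)
    (a : nat -> nat) (ha : is_generacci s b a) (p : nat) (hp : 1 <= p) :
  (forall k, 2 <= k -> legal_decomp s b a p k -> legal_decomp s b a p k.-1) /\
  (exists M : nat,
     (legal_decomp s b a p M /\ forall n, legal_decomp s b a p n -> n <= M) /\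
     (~ legal_decomp s b a p M.+1 /\
      forall n, 0 < n <= M -> legal_decomp s b a p n)).
Proof.
split=> [k|]; first exact: legal_decomp_pred.
have dec1 : legal_decomp s b a p 1.
  apply/(legal_decompE _ _ ha.1); exists [:: 1].
  by rewrite big_seq1 (generacci_a1 ha) /= hp.
have [M [dec_M M_max]] :=
  bounded_has_max (legal_decomp_le ha.1 (p := p)) dec1.
exists M; split=> //; split=> [/M_max | n]; first by rewrite ltnn.
exact: legal_decomp_downward.
Qed.
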